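(* Let $\sigma$ be a signature containing $\triangleright$ and let $\mathcal{A}$ be a $\sigma$-algebra that is representable by partial functions and whose atoms are separating. Then $\lhd$ is completely left-distributive over joins: for every $S\subseteq\mathcal{A}$ such that $\bigvee S$ exists and every $a\in\mathcal{A}$, $\bigvee\{a\lhd s : s\in S\}$ exists and equals $a \lhd \bigvee S$.
   Context: Signatures $\sigma$ are sets of operation symbols drawn from: $\triangleright$ (antidomain restriction), $;$ (composition), $\wedge$ (intersection), $\mathrm{upd}$ (update), $\sqcup$ (preferential union), $\mathsf{D}$ (domain), $\mathsf{A}$ (antidomain), interpreted on partial functions as: $f \triangleright g = \{(x,y) \in g : x \notin \mathrm{dom}(f)\}$; $f;g$ = relational composition ($f$ first); $f\wedge g = f\cap g$; $\mathrm{upd}(f,g)(x)$ is $f(x)$ if $f(x)$ defined and $g(x)$ undefined, $g(x)$ if both defined, undefined otherwise; $(f\sqcup g)(x)$ is $f(x)$ if defined, else $g(x)$; $\mathsf{D}(f)$ = identity on $\mathrm{dom}(f)$; $\mathsf{A}(f)$ = identity on the complement of $\mathrm{dom}(f)$ in the base. $\mathcal{A}$ is representable if isomorphic to a $\sigma$-algebra of partial functions with these operations. Define $0 := a\triangleright a$, $a\lhd b := (a\triangleright b)\triangleright b$ (restriction of $b$ to the domain of $a$), $a \le b :\iff a\lhd b = a$. An atom is a minimal nonzero element; atoms are separating if whenever $a\not\le b$ there is an atom $c\le a$ with $c\not\le b$. *)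

Inductive op : Type :=
  | ORestr
  | OComp
  | OMeet
  | OUpd
  | OPref
  | ODom
  | OAdom.

Definition op_type (o : op) (T : Type) : Type :=
  match o with
  | ODom | OAdom => T -> T
  | _ => T -> T -> T
  end.

Definition signature := op -> Prop.

Record sigma_algebra (sig : signature) : Type := {
  carrier :> Type;
  interp : forall o : op, sig o -> op_type o carrier
}.
Arguments interp {sig} _ o _.

(* Partial functions on a base X, represented by their graphs. *)
Definition pfun (X : Type) := X -> X -> Prop.

Definition functional {X : Type} (f : pfun X) : Prop :=
  forall x y z, f x y -> f x z -> y = z.

Definition pdom {X : Type} (f : pfun X) (x : X) : Prop := exists y, f x y.

Definition pf_restr {X} (f g : pfun X) : pfun X :=
  fun x y => g x y /\ ~ pdom f x.
Definition pf_comp {X} (f g : pfun X) : pfun X :=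
  fun x z => exists y, f x y /\ g y z.
Definition pf_meet {X} (f g : pfun X) : pfun X :=
  fun x y => f x y /\ g x y.
Definition pf_upd {X} (f g : pfun X) : pfun X :=
  fun x y => (f x y /\ ~ pdom g x) \/ (g x y /\ pdom f x).
Definition pf_pref {X} (f g : pfun X) : pfun X :=
  fun x y => f x y \/ (~ pdom f x /\ g x y).
Definition pf_D {X} (f : pfun X) : pfun X :=
  fun x y => x = y /\ pdom f x.
Definition pf_A {X} (f : pfun X) : pfun X :=
  fun x y => x = y /\ ~ pdom f x.

Definition preserves {sig : signature} (A : sigma_algebra sig) {X : Type}
  (h : A -> pfun X) (o : op) : op_type o A -> Prop :=
  match o with
  | ORestr => fun f => forall a b, h (f a b) = pf_restr (h a) (h b)
  | OComp  => fun f => forall a b, h (f a b) = pf_comp (h a) (h b)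
  | OMeet  => fun f => forall a b, h (f a b) = pf_meet (h a) (h b)
  | OUpd   => fun f => forall a b, h (f a b) = pf_upd (h a) (h b)
  | OPref  => fun f => forall a b, h (f a b) = pf_pref (h a) (h b)
  | ODom   => fun f => forall a, h (f a) = pf_D (h a)
  | OAdom  => fun f => forall a, h (f a) = pf_A (h a)
  end.

(* Representable: isomorphic to a sigma-algebra of partial functions,
   i.e. there is an injective sigma-homomorphism into partial functions
   on some base set X. *)
Definition representable {sig : signature} (A : sigma_algebra sig) : Prop :=
  exists (X : Type) (h : A -> pfun X),
    (forall a b, h a = h b -> a = b) /\
    (forall a, functional (h a)) /\
    (forall (o : op) (p : sig o), preserves A h o (interp A o p)).

Section Derived.
Context {sig : signature} (A : sigma_algebra sig) (H : sig ORestr).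

Definition restr (a b : A) : A := interp A ORestr H a b.
Definition zero (a : A) : A := restr a a.
Definition lhd (a b : A) : A := restr (restr a b) b.
Definition le (a b : A) : Prop := lhd a b = a.

(* 0 := a |> a (does not depend on a in representable algebras; we use
   the statement "c is not of the form 0" as c <> zero c). *)
Definition is_atom (c : A) : Prop :=
  c <> zero c /\ forall d, le d c -> d = zero d \/ d = c.

Definition atoms_separating : Prop :=
  forall a b, ~ le a b -> exists c, is_atom c /\ le c a /\ ~ le c b.

Definition is_lub (S : A -> Prop) (j : A) : Prop :=
  (forall s, S s -> le s j) /\
  (forall u, (forall s, S s -> le s u) -> le j u).
End Derived.

From Stdlib Require Import Classical FunctionalExtensionality PropExtensionality.

(* Fix a representation h of A by partial functions.  Under h,
   a <| b is the restriction of the graph of b to the domain of a, the order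
   le is inclusion of graphs, and zero is the empty function.  Hence
   s |-> a <| s is monotone, which gives the upper-bound half at once.
   For the least-upper-bound half the key fact is that an atom c below the
   join j of S lies below some member s of S: if c were domain-disjoint from
   every s in S, then every s would lie below c |> j, hence so would j, and
   c <= j would force c = 0.  So c <| s <> 0 for some s; as c and s are both
   below the function j, c <| s <= c, and atomicity gives c = c <| s <= s.
   Now if a <| j were not below an upper bound u of the a <| s, separating
   atoms would give an atom c <= a <| j with c not below u; but c <= s and
   dom c is inside dom a give c <= a <| s <= u, a contradiction. *)

Lemma graph_eq {X : Type} (f g : pfun X) :
  (forall p q, f p q <-> g p q) -> f = g.
Proof.
  intro E. apply functional_extensionality; intro p.
  apply functional_extensionality; intro q.
  apply propositional_extensionality, E.
Qed.

Section Representation.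
Variables (sig : signature) (H : sig ORestr) (A : sigma_algebra sig).
Variables (X : Type) (h : A -> pfun X).
Hypothesis h_inj : forall a b, h a = h b -> a = b.
Hypothesis h_fun : forall a, functional (h a).
Hypothesis h_restr : forall a b, h (restr A H a b) = pf_restr (h a) (h b).

Local Notation "a <| b" := (lhd A H a b) (at level 40).
Local Notation "a <= b" := (le A H a b).

Lemma lhd_graph a b p q : h (a <| b) p q <-> h b p q /\ pdom (h a) p.
Proof.
  unfold lhd. rewrite !h_restr. unfold pf_restr, pdom. split.
  - intros [Hb Hn]. split; [exact Hb|].
    apply NNPP; intro Hc. apply Hn. exists q. auto.
  - intros [Hb Ha]. split; [exact Hb|]. intros [z [_ Hz]]. auto.
Qed.

Lemma le_iff a b : a <= b <-> (forall p q, h a p q -> h b p q).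
Proof.
  unfold le. split.
  - intros E p q Ha. rewrite <- E in Ha. apply lhd_graph in Ha. tauto.
  - intros Sub. apply h_inj, graph_eq. intros p q. rewrite lhd_graph. split.
    + intros [Hb [q' Ha]].
      assert (q = q') by (apply (h_fun b p); auto). subst. exact Ha.
    + intros Ha. split; [auto | exists q; exact Ha].
Qed.

Lemma le_trans a b c : a <= b -> b <= c -> a <= c.
Proof. rewrite !le_iff. auto. Qed.

Lemma lhd_le_r a b : a <| b <= b.
Proof. apply le_iff. intros p q K. apply lhd_graph in K. tauto. Qed.

Lemma lhd_mono_r a s t : s <= t -> a <| s <= a <| t.
Proof.
  rewrite !le_iff. intros Sub p q K. apply lhd_graph in K. apply lhd_graph.
  destruct K as [Ks Ka]. split; auto.
Qed.

Lemma le_lhd_shrink a c s t : c <= s -> c <= a <| t -> c <= a <| s.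
Proof.
  rewrite !le_iff. intros Hs Ht p q K. apply lhd_graph. split; [auto|].
  apply (proj2 (proj1 (lhd_graph _ _ _ _) (Ht p q K))).
Qed.

Lemma lhd_le_l_compatible c s j : c <= j -> s <= j -> c <| s <= c.
Proof.
  rewrite !le_iff. intros Hc Hs p q K. apply lhd_graph in K.
  destruct K as [Ks [q' Kc]].
  assert (q = q') by (apply (h_fun j p); auto). subst. exact Kc.
Qed.

Lemma lhd_zero_iff a b :
  a <| b = zero A H (a <| b) <-> (forall p, pdom (h a) p -> ~ pdom (h b) p).
Proof.
  assert (Hz : forall d p q, ~ h (zero A H d) p q).
  { intros d p q. unfold zero. rewrite h_restr. intros [Hd Hn]. apply Hn.
    exists q. exact Hd. }
  split.
  - intros E p Ha [q Hb]. apply (Hz (a <| b) p q). rewrite <- E.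
    apply lhd_graph. auto.
  - intros Disj. apply h_inj, graph_eq. intros p q. split; intro K.
    + exfalso. apply lhd_graph in K. destruct K as [Kb Ka].
      exact (Disj p Ka (ex_intro _ q Kb)).
    + exfalso. exact (Hz _ _ _ K).
Qed.

(* An element domain-disjoint from every member of S is domain-disjoint
   from their join: every member, hence the join, lies below c |> j. *)
Lemma lub_disjoint S j c :
  is_lub A H S j ->
  (forall s, S s -> c <| s = zero A H (c <| s)) ->
  c <| j = zero A H (c <| j).
Proof.
  intros [Hub Hleast] Disj. apply lhd_zero_iff. intros p Hc [q Hj].
  assert (Hjr : j <= restr A H c j).
  { apply Hleast. intros s Hs. apply le_iff. intros p' q' K.
    rewrite h_restr. split.
    - exact (proj1 (le_iff _ _) (Hub s Hs) p' q' K).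
    - intro Hc'. exact (proj1 (lhd_zero_iff c s) (Disj s Hs) p' Hc'
                         (ex_intro _ q' K)). }
  pose proof (proj1 (le_iff _ _) Hjr p q Hj) as K.
  rewrite h_restr in K. exact (proj2 K Hc).
Qed.

Lemma atom_below_lub S j c :
  is_lub A H S j -> is_atom A H c -> c <= j -> exists s, S s /\ c <= s.
Proof.
  intros Hlub [Hnz Hat] Hcj.
  assert (Meets : exists s, S s /\ c <| s <> zero A H (c <| s)).
  { apply NNPP; intro Nex. apply Hnz.
    assert (Hz : c <| j = zero A H (c <| j)).
    { apply (lub_disjoint S j c Hlub). intros s Hs.
      apply NNPP; intro Hn. apply Nex. exists s. auto. }
    unfold le in Hcj. rewrite Hcj in Hz. exact Hz. }
  destruct Meets as [s [Hs Hnz_s]]. exists s. split; [exact Hs|].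
  destruct (Hat (c <| s)) as [Z | E].
  - exact (lhd_le_l_compatible c s j Hcj (proj1 Hlub s Hs)).
  - contradiction.
  - rewrite <- E. apply lhd_le_r.
Qed.
End Representation.

Theorem lemma5p7 (sig : signature) (H : sig ORestr) (A : sigma_algebra sig) :
  representable A ->
  atoms_separating A H ->
  forall (S : A -> Prop) (j : A) (a : A),
    is_lub A H S j ->
    is_lub A H (fun t => exists s, S s /\ t = lhd A H a s) (lhd A H a j).
Proof.
  intros [X [h [h_inj [h_fun h_pres]]]] Hsep S j a Hlub.
  pose proof (fun x y => h_pres ORestr H x y : _ = _) as h_restr.
  pose proof (le_trans sig H A X h h_inj h_fun h_restr) as Htrans.
  split.
  - intros t [s [Hs ->]].
    exact (lhd_mono_r sig H A X h h_inj h_fun h_restr a s j (proj1 Hlub s Hs)).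
  - intros u Hu. apply NNPP; intro Hn.
    destruct (Hsep _ _ Hn) as [c [Hatom [Hc_aj Hc_u]]]. apply Hc_u.
    assert (Hcj : le A H c j)
      by exact (Htrans _ _ _ Hc_aj (lhd_le_r sig H A X h h_inj h_fun h_restr a j)).
    destruct (atom_below_lub sig H A X h h_inj h_fun h_restr S j c Hlub Hatom Hcj)
      as [s [Hs Hcs]].
    apply (Htrans _ (lhd A H a s)).
    + exact (le_lhd_shrink sig H A X h h_inj h_fun h_restr a c s j Hcs Hc_aj).
    + exact (Hu _ (ex_intro _ s (conj Hs eq_refl))).
Qed.
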